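(* Let $m\ge2$, $n\ge1$, and let $\mathcal{A}\in\mathbb{R}_+^{[m,n]}$ be weakly irreducible. Let $k$ be any fixed positive integer, and let $\mathcal{S}_k$ be the set of tensors $\mathcal{B}\in\mathbb{R}_+^{[k,n]}$ with $r_i(\mathcal{B})\neq0$ for all $i\in[n]$. Then the maximum and minimum below are attained and \[\max_{\mathcal{B}\in\mathcal{S}_k}\ \min_{i\in[n]}\frac{r_i(\mathcal{A}\mathcal{B})}{(r_i(\mathcal{B}))^{m-1}}=\rho(\mathcal{A})=\min_{\mathcal{B}\in\mathcal{S}_k}\ \max_{i\in[n]}\frac{r_i(\mathcal{A}\mathcal{B})}{(r_i(\mathcal{B}))^{m-1}}.\]
   Context: $[n]=\{1,\ldots,n\}$. $\mathbb{R}_+^{[m,n]}$ denotes the set of order $m$, dimension $n$ tensors $\mathcal{A}=(a_{i_1\cdots i_m})$, $i_j\in[n]$, with nonnegative real entries (for order $1$: nonnegative vectors). A tensor $\mathcal{A}\in\mathbb{R}_+^{[m,n]}$ is called weakly irreducible (as defined in this paper) if for every nonempty proper subset $I\subset[n]$ there exist $i_1,\ldots,i_m$ with $a_{i_1i_2\cdots i_m}>0$, $i_1\in I$ and $i_j\in[n]\setminus I$ for all $j\in\{2,\ldots,m\}$. For a tensor $\mathcal{T}=(t_{i_1\cdots i_p})$ of order $p$ and dimension $n$, $r_i(\mathcal{T})=\sum_{i_2,\ldots,i_p=1}^n|t_{ii_2\cdots i_p}|$ (for $p=1$, $r_i(\mathcal{T})=|t_i|$). General product: for $\mathcal{A}$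 of order $m\ge2$ and $\mathcal{B}$ of order $k\ge1$, $\mathcal{A}\mathcal{B}=(c_{i\alpha_1\cdots\alpha_{m-1}})$ is the order $(m-1)(k-1)+1$, dimension $n$ tensor with $c_{i\alpha_1\cdots\alpha_{m-1}}=\sum_{i_2,\ldots,i_m=1}^n a_{ii_2\cdots i_m}b_{i_2\alpha_1}\cdots b_{i_m\alpha_{m-1}}$, $i\in[n]$, $\alpha_j\in[n]^{k-1}$ (where $b_{j\alpha}$ with $\alpha=(j_2,\ldots,j_k)$ means $b_{jj_2\cdots j_k}$). Eigenvalues: $\lambda\in\mathbb{C}$ is an eigenvalue of $\mathcal{A}$ if there is a nonzero $x\in\mathbb{C}^n$ with $\sum_{i_2,\ldots,i_m=1}^n a_{ii_2\cdots i_m}x_{i_2}\cdots x_{i_m}=\lambda x_i^{m-1}$ for all $i\in[n]$; $\rho(\mathcal{A})$ is the maximum modulus of the eigenvalues of $\mathcal{A}$. *)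

From HB Require Import structures.
From mathcomp Require Import all_boot all_algebra.
From mathcomp Require Import Rstruct complex.
From Stdlib Require Import Reals.
Set Implicit Arguments. Unset Strict Implicit. Unset Printing Implicit Defensive.
Import GRing.Theory Num.Theory.
Local Open Scope ring_scope.

Notation RR := Rdefinitions.R.

(* A (real) tensor of order p and dimension n: entry t_{i_1 i_2 ... i_p} is
   [T i1 (tail)], where [tail : {ffun 'I_p.-1 -> 'I_n}] lists (i_2,...,i_p).
   (Used for p >= 1.) *)
Definition tensor (p n : nat) := 'I_n -> {ffun 'I_p.-1 -> 'I_n} -> RR.

Definition nonneg_tensor (p n : nat) (T : tensor p n) : Prop :=
  forall i a, 0 <= T i a.

Definition weakly_irreducible (m n : nat) (A : tensor m n) : Prop :=
  forall I : {set 'I_n}, I != set0 -> I != setT ->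
    exists i (a : {ffun 'I_m.-1 -> 'I_n}),
      [/\ 0 < A i a, i \in I & forall j, a j \notin I].

Definition rsum (n : nat) (J : finType) (T : 'I_n -> J -> RR) (i : 'I_n) : RR :=
  \sum_(a : J) `|T i a|.

(* General product AB for A of order m, B of order k: the result has order
   (m-1)(k-1)+1, with entries c_{i alpha_1 ... alpha_{m-1}}, alpha_j in [n]^{k-1};
   its tail index is the (m-1)-tuple (alpha_1,...,alpha_{m-1}). *)
Definition gprod (m k n : nat) (A : tensor m n) (B : tensor k n) :
  'I_n -> {ffun 'I_m.-1 -> {ffun 'I_k.-1 -> 'I_n}} -> RR :=
  fun i al => \sum_(a : {ffun 'I_m.-1 -> 'I_n})
                 A i a * \prod_(j < m.-1) B (a j) (al j).

Definition is_eigenvalue (m n : nat) (A : tensor m n) (l : RR[i]) : Prop :=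
  exists x : 'I_n -> RR[i], (exists i, x i != 0) /\
    forall i, \sum_(a : {ffun 'I_m.-1 -> 'I_n})
                 (A i a)%:C%C * \prod_(j < m.-1) x (a j) = l * x i ^+ m.-1.

Definition spectral_radius (m n : nat) (A : tensor m n) (r : RR) : Prop :=
  (exists l, is_eigenvalue A l /\ `|l| = r%:C%C) /\
  (forall l, is_eigenvalue A l -> `|l| <= r%:C%C).

Definition S_k (k n : nat) (B : tensor k n) : Prop :=
  nonneg_tensor B /\ forall i, rsum B i != 0.

Definition tratio (m k n : nat) (A : tensor m n) (B : tensor k n) (i : 'I_n) : RR :=
  rsum (gprod A B) i / (rsum B i) ^+ m.-1.

Definition is_min_over (n : nat) (f : 'I_n -> RR) (v : RR) : Prop :=
  (forall i, v <= f i) /\ exists i, f i = v.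
Definition is_max_over (n : nat) (f : 'I_n -> RR) (v : RR) : Prop :=
  (forall i, f i <= v) /\ exists i, f i = v.

(* Let rho be the supremum of the lower Collatz-Wielandt numbers, i.e. of the t with
   t y_i^(m-1) <= (A y^(m-1))_i for some positive y.  Normalising almost optimal y to the
   simplex and taking a cluster point gives x >= 0, x <> 0 with rho x_i^(m-1) <= (A x^(m-1))_i.
   If this inequality were strict on a nonempty set S of indices, raising x slightly on S
   would keep it strict there and, by weak irreducibility, make it strict at one more index;
   after at most n steps it would be strict everywhere at a positive vector, against the
   maximality of rho.  So x is an eigenvector for rho, and weak irreducibility makes it
   positive.  Comparing any y with the extremal multiples of a positive eigenvector gives the
   Collatz-Wielandt bounds min_i (A y^(m-1))_i / y_i^(m-1) <= rho <= max_i (...).  Applied to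
   y = |z| for an eigenvector z they bound every eigenvalue; applied to y_i = r_i(B), using
   r_i(AB) = (A r(B)^(m-1))_i, they give the max-min and min-max characterisations, attained
   at the diagonal tensor with diagonal x. *)

From HB Require Import structures.
From mathcomp Require Import all_boot all_order all_algebra.
From mathcomp Require Import Rstruct complex.
From mathcomp Require Import boolp classical_sets reals interval_inference.
From mathcomp Require Import topology normedtype realfun.
(* Imported again so that set0, setT and subsetP refer to finset and fintype, not classical_sets. *)
From mathcomp Require Import fintype finset.
From mathcomp Require Import zify.
Set Implicit Arguments. Unset Strict Implicit. Unset Printing Implicit Defensive.
Import Order.TTheory GRing.Theory Num.Theory numFieldTopology.Exports numFieldNormedType.Exports.
Local Open Scope ring_scope.

Section TensorMap.
Variables (R : comPzRingType) (n q : nat) (A : 'I_n -> {ffun 'I_q -> 'I_n} -> R).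

(* [tapply A x i] is the paper's (A x^(m-1))_i, for q = m - 1 tail indices. *)
Definition tapply (x : 'I_n -> R) (i : 'I_n) : R :=
  \sum_(a : {ffun 'I_q -> 'I_n}) A i a * \prod_(j < q) x (a j).

Lemma tapplyZ c x i : tapply (fun j => c * x j) i = c ^+ q * tapply x i.
Proof.
rewrite mulr_sumr; apply: eq_bigr => a _.
by rewrite big_split /= prodr_const card_ord mulrCA.
Qed.

Lemma tapply0 i : (0 < q)%N -> tapply (fun=> 0) i = 0.
Proof.
move=> q_gt0; apply: big1 => a _.
by rewrite prodr_const card_ord expr0n eqn0Ngt q_gt0 mulr0.
Qed.

End TensorMap.

Section NonnegTensorMap.
Variables (R : numDomainType) (n q : nat) (A : 'I_n -> {ffun 'I_q -> 'I_n} -> R).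
Hypothesis A_ge0 : forall i a, 0 <= A i a.

Lemma tapply_ge0 x i : (forall j, 0 <= x j) -> 0 <= tapply A x i.
Proof.
by move=> x_ge0; apply: sumr_ge0 => a _; rewrite mulr_ge0 ?prodr_ge0.
Qed.

Lemma ler_tapply x y i : (forall j, 0 <= x j <= y j) ->
  tapply A x i <= tapply A y i.
Proof. by move=> lexy; apply: ler_sum => a _; rewrite ler_wpM2l ?ler_prod. Qed.

Lemma ltr_tapply x y i (a : {ffun 'I_q -> 'I_n}) : (0 < q)%N ->
  (forall j, 0 <= x j <= y j) -> 0 < A i a -> (forall j, x (a j) < y (a j)) ->
  tapply A x i < tapply A y i.
Proof.
move=> q_gt0 lexy Aia ltxy; rewrite /tapply (bigD1 a) //= [ltRHS](bigD1 a) //=.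
apply: ltr_leD; last by apply: ler_sum => b _; rewrite ler_wpM2l ?ler_prod.
rewrite ltr_pM2l // ltr_prod //; last by move=> j _; rewrite ltxy andbT (andP (lexy _)).1.
by apply/hasP; exists (Ordinal q_gt0); rewrite ?mem_index_enum.
Qed.

End NonnegTensorMap.

Section CollatzWielandt.
Variables (R : realFieldType) (n q : nat) (A : 'I_n -> {ffun 'I_q -> 'I_n} -> R).
Hypothesis A_ge0 : forall i a, 0 <= A i a.
Variables (x : 'I_n -> R) (rho : R).
Hypothesis x_gt0 : forall i, 0 < x i.
Hypothesis x_eigen : forall i, tapply A x i = rho * x i ^+ q.

Lemma tapply_scaled_eigen t i : tapply A (fun j => t * x j) i = rho * (t * x i) ^+ q.
Proof. by rewrite tapplyZ x_eigen mulrCA exprMn. Qed.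

Lemma collatz_wielandt_le y v : (forall i, 0 <= y i) -> (exists i, 0 < y i) ->
  (forall i, v * y i ^+ q <= tapply A y i) -> v <= rho.
Proof.
move=> y_ge0 [j y_gt0] le_vy.
have [i _ max_i] := @arg_maxP _ _ _ j predT (fun i => y i / x i) isT.
set t := y i / x i in max_i.
have t_gt0 : 0 < t by apply: lt_le_trans (max_i j isT); rewrite divr_gt0.
have yi : y i = t * x i by rewrite /t divfK ?gt_eqF.
have le_ytx l : 0 <= y l <= t * x l by rewrite y_ge0 -ler_pdivrMr //; exact: max_i.
have := le_trans (le_vy i) (ler_tapply A_ge0 i le_ytx).
by rewrite tapply_scaled_eigen -yi ler_pM2r // exprn_gt0 // yi mulr_gt0.
Qed.

Lemma collatz_wielandt_ge (j : 'I_n) y v : (forall i, 0 < y i) ->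
  (forall i, tapply A y i <= v * y i ^+ q) -> rho <= v.
Proof.
move=> y_gt0 le_yv.
have [i _ min_i] := @arg_minP _ _ _ j predT (fun i => y i / x i) isT.
set t := y i / x i in min_i.
have t_gt0 : 0 < t by rewrite divr_gt0.
have yi : y i = t * x i by rewrite /t divfK ?gt_eqF.
have le_txy l : 0 <= t * x l <= y l.
  by rewrite -ler_pdivlMr // min_i // andbT mulr_ge0 // ltW.
have := le_trans (ler_tapply A_ge0 i le_txy) (le_yv i).
by rewrite tapply_scaled_eigen -yi ler_pM2r // exprn_gt0.
Qed.

End CollatzWielandt.

Local Open Scope classical_set_scope.

Lemma cluster_le (R : realFieldType) (T : topologicalType) (F : set_system T) {FF : Filter F}
    (x : T) (f g : T -> R) :
  cluster F x -> continuous f -> continuous g -> F [set v | f v <= g v] -> f x <= g x.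
Proof.
move=> clx cf cg Ffg; rewrite -subr_ge0.
have closed_fg : closed ((fun v => g v - f v) @^-1` [set r : R | 0 <= r]).
  apply: preimage_closed; last exact: closed_ge.
  by move=> v _; exact: (continuousB (cg v) (cf v)).
by apply: closed_fg => B FB; apply: clx FB; apply: filterS Ffg => v /=; rewrite subr_ge0.
Qed.

Section SimplexLimit.
Variables (R : realType) (n q : nat) (A : 'I_n -> {ffun 'I_q -> 'I_n} -> R).

Lemma continuous_tapply i :
  continuous (fun v : 'rV[R]_n => tapply A (fun j => v ord0 j) i).
Proof.
apply: continuous_big => [|a _ v]; first exact: add_continuous.
apply: continuousM; first exact: cst_continuous.
by apply: continuous_big => [|j _]; [exact: mul_continuous | exact: coord_continuous].
Qed.

Lemma continuous_scaled_coord_expr (r : R) i :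
  continuous (fun v : 'rV[R]_n => r * v ord0 i ^+ q).
Proof.
move=> v; apply: (@continuousM _ _ (fun=> r) (fun v : 'rV[R]_n => v ord0 i ^+ q) v).
  exact: cst_continuous.
apply: (@continuous_comp _ _ _ (fun v : 'rV[R]_n => v ord0 i) (fun x => x ^+ q)).
  exact: coord_continuous.
exact: exprn_continuous.
Qed.

Lemma continuous_coord_sum : continuous (fun v : 'rV[R]_n => \sum_i v ord0 i).
Proof.
by apply: continuous_big => [|j _]; [exact: add_continuous | exact: coord_continuous].
Qed.

Lemma simplex_limit (r : R) (z : nat -> 'I_n -> R) :
  (forall N, [/\ forall i, 0 <= z N i, \sum_i z N i = 1 &
    forall i, r * z N i ^+ q <= tapply A (z N) i + N.+1%:R^-1]) ->
  exists x : 'I_n -> R, [/\ forall i, 0 <= x i, \sum_i x i = 1 &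
    forall i, r * x i ^+ q <= tapply A x i].
Proof.
move=> z_spec.
have z_ge0 N i : 0 <= z N i by case: (z_spec N).
have z_sum N : \sum_i z N i = 1 by case: (z_spec N).
have z_approx N i : r * z N i ^+ q <= tapply A (z N) i + N.+1%:R^-1 by case: (z_spec N).
pose Z N : 'rV[R]_n := \row_i z N i.
have ZE N : (fun j => Z N ord0 j) = z N by apply/funext => j; rewrite mxE.
have z_le1 N i : z N i <= 1.
  by rewrite -(z_sum N) (bigD1 i) //= lerDl sumr_ge0.
have box_compact := rV_compact (fun _ : 'I_n => @segment_compact R 0 1).
have Z01 : (Z @ \oo) [set v | forall i, `[0, 1] (v ord0 i)].
  by exists 0%N => // N _ i; rewrite /= mxE in_itv /= z_ge0 z_le1.
have [x [x01 clx]] := box_compact _ _ Z01.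
have lim_le (f g : 'rV[R]_n -> R) : continuous f -> continuous g ->
    (\forall N \near \oo, f (Z N) <= g (Z N)) -> f x <= g x.
  by move=> cf cg; apply: cluster_le clx cf cg.
exists (fun i => x ord0 i); split.
- by move=> i; have /andP[] := x01 i.
- apply/eqP; rewrite eq_le; apply/andP; split.
    apply: (lim_le _ (fun=> 1) continuous_coord_sum (@cst_continuous _ R 1)).
    by apply: nearW => N /=; rewrite -(z_sum N); under eq_bigr do rewrite /Z mxE.
  apply: (lim_le (fun=> 1) _ (@cst_continuous _ R 1) continuous_coord_sum).
  by apply: nearW => N /=; rewrite -(z_sum N); under eq_bigr do rewrite /Z mxE.
- move=> i; apply/ler_addgt0Pr => e e_gt0.
  apply: (lim_le (fun v => r * v ord0 i ^+ q)
                 (fun v => tapply A (fun j => v ord0 j) i + e)).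
  - exact: continuous_scaled_coord_expr.
  - by move=> v; apply: continuousD; [exact: continuous_tapply | exact: cst_continuous].
  near=> N; rewrite ZE mxE; apply: (le_trans (z_approx N i)); rewrite lerD2l ltW //.
  by near: N; exact: near_infty_natSinv_lt (PosNum e_gt0).
Unshelve. all: by end_near.
Qed.

End SimplexLimit.

Lemma shift_expr_lt (R : realType) (I : finType) (P : pred I) (r : R) (a c : I -> R) q :
  (forall i, P i -> r * a i ^+ q < c i) ->
  exists2 e, 0 < e & forall i, P i -> r * (a i + e) ^+ q < c i.
Proof.
move=> lt_ac.
have near_lt i : \forall e \near 0^'+, P i -> r * (a i + e) ^+ q < c i.
  have [Pi|_] := boolP (P i); last by near=> e.
  have cont : (fun e => r * (a i + e) ^+ q) @ 0^'+ --> r * a i ^+ q.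
    apply: cvg_at_right_filter; rewrite -[in X in _ --> X](addr0 (a i)).
    apply: cvgM; first exact: cvg_cst.
    apply: (@continuous_cvg _ _ _ _ _ (fun e => a i + e) (fun x => x ^+ q)).
      exact: exprn_continuous.
    by apply: cvgD; [exact: cvg_cst | exact: cvg_id].
  by near=> e => _; near: e; exact: cvgr_lt cont _ (lt_ac i Pi).
have [e [e_gt0 lt_e]] := filter_ex (filterI (nbhs_right_gt 0) (filter_forall _ near_lt)).
by exists e.
Unshelve. all: by end_near.
Qed.

Local Close Scope classical_set_scope.

Section PerronVector.
Variables (m n : nat) (A : tensor m n) (i0 : 'I_n).
Hypotheses (A_ge0 : nonneg_tensor A) (A_irr : weakly_irreducible A) (m_gt1 : (1 < m)%N).
Local Notation q := m.-1.

Let q_gt0 : (0 < q)%N. Proof. by rewrite -subn1 subn_gt0. Qed.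

Lemma nonneg_eigenvector_gt0 (x : 'I_n -> RR) l : (forall i, 0 <= x i) ->
  (exists i, x i != 0) -> (forall i, tapply A x i = l * x i ^+ q) -> forall i, 0 < x i.
Proof.
move=> x_ge0 [j xj_neq0] x_eigen; set Z := [set i | x i == 0].
suff Z_eq0 : Z = set0.
  move=> i; have : i \notin Z by rewrite Z_eq0 in_set0.
  by rewrite inE lt_def x_ge0 andbT.
apply/eqP; apply: contraT => Z_neq0.
have Z_neqT : Z != setT.
  by apply: contraNneq xj_neq0 => ZT; have := in_setT j; rewrite -ZT inE.
have [i [a [Aia /[!inE]/eqP xi0 aNZ]]] := A_irr Z_neq0 Z_neqT.
have : tapply A (fun=> 0) i < tapply A x i.
  apply: (ltr_tapply A_ge0 q_gt0 _ Aia) => k; first by rewrite lexx x_ge0.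
  by rewrite lt_def x_ge0 andbT; have := aNZ k; rewrite inE.
by rewrite tapply0 // x_eigen xi0 expr0n eqn0Ngt q_gt0 mulr0 ltxx.
Qed.

Definition lower_cw_set : set RR := fun t => exists2 y : 'I_n -> RR,
  (forall i, 0 < y i) & forall i, t * y i ^+ q <= tapply A y i.

Lemma lower_cw_set0 : lower_cw_set 0.
Proof. by exists (fun=> 1) => i; rewrite ?ltr01 // mul0r tapply_ge0 // => j; rewrite ler01. Qed.

Lemma has_sup_lower_cw_set : has_sup lower_cw_set.
Proof.
split; first by exists 0; exact: lower_cw_set0.
exists (\sum_i \sum_a A i a) => t [y y_gt0 le_ty].
have [i _ max_i] := @arg_maxP _ _ _ i0 predT y isT.
have le_yi : tapply A y i <= (\sum_a A i a) * y i ^+ q.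
  rewrite mulr_suml; apply: ler_sum => a _; rewrite ler_wpM2l //.
  rewrite -[q in _ ^+ q]card_ord -prodr_const.
  by apply: ler_prod => j _; rewrite ltW ?y_gt0 //=; exact: max_i.
have le_t : t <= \sum_a A i a.
  by rewrite -(ler_pM2r (exprn_gt0 q (y_gt0 i))) (le_trans (le_ty i)).
by rewrite (le_trans le_t) // (bigD1 i) //= lerDl sumr_ge0 // => j _; rewrite sumr_ge0.
Qed.

Definition perron_root : RR := sup lower_cw_set.
Local Notation rho := perron_root.

Lemma perron_root_approx N : exists z : 'I_n -> RR,
  [/\ forall i, 0 <= z i, \sum_i z i = 1 &
      forall i, rho * z i ^+ q <= tapply A z i + N.+1%:R^-1].
Proof.
have e_gt0 : 0 < N.+1%:R^-1 :> RR by rewrite invr_gt0 ltr0n.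
have [t [y y_gt0 le_ty] lt_t] := sup_adherent e_gt0 has_sup_lower_cw_set.
set s := \sum_i y i.
have le_ys i : y i <= s by rewrite /s (bigD1 i) //= lerDl sumr_ge0 // => j _; rewrite ltW.
have s_gt0 : 0 < s := lt_le_trans (y_gt0 i0) (le_ys i0).
exists (fun i => s^-1 * y i); split.
- by move=> i; rewrite mulr_ge0 ?invr_ge0 ?ltW.
- by rewrite -mulr_sumr mulVf ?gt_eqF.
move=> i; set z := s^-1 * y i.
have z_ge0 : 0 <= z by rewrite mulr_ge0 ?invr_ge0 ?ltW.
have zq_le1 : z ^+ q <= 1 by rewrite exprn_ile1 // /z mulrC ler_pdivrMr // mul1r.
have le_tz : t * z ^+ q <= tapply A (fun j => s^-1 * y j) i.
  by rewrite tapplyZ /z exprMn mulrCA ler_pM2l ?le_ty // exprn_gt0 // invr_gt0.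
have le_rho : rho * z ^+ q <= (t + N.+1%:R^-1) * z ^+ q.
  by rewrite ler_wpM2r ?exprn_ge0 // ltW // -ltrBlDr.
apply: (le_trans le_rho); rewrite mulrDl lerD // ler_piMr // ltW.
Qed.

Lemma perron_root_not_strict y : (forall i, 0 < y i) ->
  ~ (forall i, rho * y i ^+ q < tapply A y i).
Proof.
move=> y_gt0 lt_rho.
have [i _ min_i] := @arg_minP _ _ _ i0 predT (fun i => tapply A y i / y i ^+ q) isT.
have t_cw : lower_cw_set (tapply A y i / y i ^+ q).
  by exists y => // j; rewrite -ler_pdivlMr ?exprn_gt0 ?min_i.
have := sup_upper_bound has_sup_lower_cw_set t_cw.
by rewrite leNgt ltr_pdivlMr ?exprn_gt0 ?lt_rho.
Qed.

Definition subeigenvector (x : 'I_n -> RR) :=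
  (forall i, 0 <= x i) /\ (forall i, rho * x i ^+ q <= tapply A x i).

Definition strict_set (x : 'I_n -> RR) : {set 'I_n} :=
  [set i | rho * x i ^+ q < tapply A x i].

Lemma strict_set_grow x : subeigenvector x -> strict_set x != set0 ->
  exists2 x', subeigenvector x' & strict_set x \proper strict_set x'.
Proof.
move=> [x_ge0 x_sub] S_neq0; set S := strict_set x in S_neq0 *.
have [|e e_gt0 lt_e] := @shift_expr_lt _ _ (fun i => i \in S) rho x (tapply A x) q.
  by move=> i; rewrite inE.
pose x' j := x j + (if j \in S then e else 0).
have le_xx' j : 0 <= x j <= x' j.
  by rewrite x_ge0 /x' lerDl /=; case: ifP => // _; exact: ltW.
have lt_S i : i \in S -> rho * x' i ^+ q < tapply A x' i.
  by move=> iS; rewrite /x' iS (lt_le_trans (lt_e i iS)) ?ler_tapply.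
have x'_sub : subeigenvector x'.
  split=> [j | i]; first by have /andP[/le_trans] := le_xx' j; apply.
  have [iS | iNS] := boolP (i \in S); first exact/ltW/lt_S.
  by rewrite /x' (negbTE iNS) addr0 (le_trans (x_sub i)) ?ler_tapply.
have S_neqT : S != setT.
  apply/eqP=> ST; apply: (perron_root_not_strict (y := x')) => [j | i].
    by rewrite /x' ST inE ltr_wpDl.
  by rewrite lt_S ?ST.
have SC_neq0 : ~: S != set0 by rewrite -setCT (inj_eq (@setC_inj _)).
have SC_neqT : ~: S != setT by rewrite -setC0 (inj_eq (@setC_inj _)).
have [i [a [Aia iNS aS]]] := A_irr SC_neq0 SC_neqT.
exists x' => //; apply/properP; split; first by apply/subsetP => j /lt_S; rewrite inE.
rewrite in_setC in iNS; exists i => //; rewrite inE.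
rewrite /x' (negbTE iNS) addr0 (le_lt_trans (x_sub i)) //.
apply: (ltr_tapply A_ge0 q_gt0 le_xx' Aia) => j.
by have := aS j; rewrite in_setC negbK /x' => ->; rewrite ltrDl.
Qed.

Lemma strict_set_eq0 x : subeigenvector x -> strict_set x = set0.
Proof.
have [k] := ubnP (n - #|strict_set x|); elim: k x => // k IH x lt_k x_sub.
apply/eqP; apply: contraT => S_neq0.
have [x' x'_sub ltS] := strict_set_grow x_sub S_neq0.
have le_n : (#|strict_set x'| <= n)%N by rewrite -[n in (_ <= n)%N]card_ord max_card.
have lt_card := proper_card ltS.
have S'_eq0 : strict_set x' = set0 by apply: IH x'_sub; lia.
by move: lt_card; rewrite S'_eq0 cards0.
Qed.

Lemma subeigenvector_eigen x : subeigenvector x ->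
  forall i, tapply A x i = rho * x i ^+ q.
Proof.
move=> x_sub i; have : i \notin strict_set x by rewrite strict_set_eq0 // in_set0.
by rewrite inE -leNgt => le_Fx; apply/eqP; rewrite eq_le le_Fx (x_sub.2 i).
Qed.

Lemma perron_eigenvector : exists2 x : 'I_n -> RR,
  forall i, 0 < x i & forall i, tapply A x i = rho * x i ^+ q.
Proof.
have [z z_spec] := choice perron_root_approx.
have [x [x_ge0 x_sum x_sub]] := simplex_limit z_spec.
have x_eigen := subeigenvector_eigen (conj x_ge0 x_sub).
exists x => //; apply: nonneg_eigenvector_gt0 x_eigen => //.
apply/existsP; rewrite -negb_forall; apply/negP => /forallP x0.
by move: x_sum; rewrite big1 => [/esym/eqP | i _]; [rewrite oner_eq0 | exact/eqP/x0].
Qed.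

End PerronVector.

Lemma rsum_ge0 n (J : finType) (T : 'I_n -> J -> RR) i : 0 <= rsum T i.
Proof. by apply: sumr_ge0 => a _; exact: normr_ge0. Qed.

Lemma S_k_rsum_gt0 k n (B : tensor k n) i : S_k B -> 0 < rsum B i.
Proof. by move=> [_ B_neq0]; rewrite lt_def B_neq0 rsum_ge0. Qed.

Lemma rsum_gprod m k n (A : tensor m n) (B : tensor k n) i :
  nonneg_tensor A -> nonneg_tensor B -> rsum (gprod A B) i = tapply A (rsum B) i.
Proof.
move=> A_ge0 B_ge0; rewrite /rsum /gprod /tapply.
under eq_bigr => al _.
  rewrite ger0_norm; last by apply: sumr_ge0 => a _; rewrite mulr_ge0 ?prodr_ge0.
  over.
rewrite exchange_big; apply: eq_bigr => a _; rewrite -mulr_sumr; congr (_ * _).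
rewrite -(bigA_distr_bigA (fun j b => B (a j) b)).
by apply: eq_bigr => j _; apply: eq_bigr => b _; rewrite ger0_norm.
Qed.

Lemma tratioE m k n (A : tensor m n) (B : tensor k n) i :
  nonneg_tensor A -> nonneg_tensor B ->
  tratio A B i = tapply A (rsum B) i / rsum B i ^+ m.-1.
Proof. by move=> A_ge0 B_ge0; rewrite /tratio rsum_gprod. Qed.

Definition diag_tensor k n (x : 'I_n -> RR) : tensor k n :=
  fun i b => if b == [ffun=> i] then x i else 0.
Arguments diag_tensor k {n} x.

Lemma rsum_diag_tensor k n (x : 'I_n -> RR) i : rsum (diag_tensor k x) i = `|x i|.
Proof.
rewrite /rsum (bigD1 [ffun=> i]) //= big1 ?addr0 => [|b /negbTE b_neq].
  by rewrite /diag_tensor eqxx.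
by rewrite /diag_tensor b_neq normr0.
Qed.

Lemma diag_tensor_ge0 k n (x : 'I_n -> RR) :
  (forall i, 0 <= x i) -> nonneg_tensor (diag_tensor k x).
Proof. by move=> x_ge0 i b; rewrite /diag_tensor; case: ifP. Qed.

Lemma S_k_diag_tensor k n (x : 'I_n -> RR) :
  (forall i, 0 < x i) -> S_k (diag_tensor k x).
Proof.
move=> x_gt0; split=> [|i]; first by apply: diag_tensor_ge0 => i; exact: ltW.
by rewrite rsum_diag_tensor normr_eq0 gt_eqF.
Qed.

Section PositiveEigenvector.
Variables (m n : nat) (A : tensor m n) (x : 'I_n -> RR) (r : RR).
Hypotheses (A_ge0 : nonneg_tensor A) (x_gt0 : forall i, 0 < x i).
Hypothesis x_eigen : forall i, tapply A x i = r * x i ^+ m.-1.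
Local Notation q := m.-1.
Local Open Scope complex_scope.

Lemma eigenvalue_norm_le l : is_eigenvalue A l -> `|l| <= r%:C.
Proof.
move=> [z [[j zj_neq0] z_eigen]].
pose w i := ComplexField.Normc.normc (z i).
have normE (c : RR[i]) : `|c| = (ComplexField.Normc.normc c)%:C by [].
have w_ge0 i : 0 <= w i by rewrite -ler0c -normE.
have wj_gt0 : 0 < w j.
  by rewrite lt_def w_ge0 andbT -(inj_eq (@complexI _)); rewrite -normr_eq0 in zj_neq0.
rewrite normE lecR; apply: (collatz_wielandt_le A_ge0 x_gt0 x_eigen w_ge0) => [|i].
  by exists j.
rewrite -lecR; have -> : (ComplexField.Normc.normc l * w i ^+ q)%:C = `|l * z i ^+ q|.
  by rewrite rmorphM rmorphXn normrM normrX.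
rewrite -z_eigen /tapply rmorph_sum.
apply: le_trans (ler_norm_sum _ _ _) _; apply: ler_sum => a _.
by rewrite normrM normr_prod rmorphM rmorph_prod ger0_norm ?lecR.
Qed.

Lemma spectral_radius_positive_eigenvector (i0 : 'I_n) : spectral_radius A r.
Proof.
have r_ge0 : 0 <= r.
  rewrite -(pmulr_lge0 _ (exprn_gt0 q (x_gt0 i0))) -x_eigen.
  by apply: tapply_ge0 => // j; exact: ltW.
split; last exact: eigenvalue_norm_le.
exists r%:C; split; last by rewrite ger0_norm ?lecR.
exists (fun i => (x i)%:C); split.
  by exists i0; rewrite fmorph_eq0 gt_eqF.
move=> i; rewrite -rmorphXn -rmorphM -x_eigen /tapply rmorph_sum.
by apply: eq_bigr => a _; rewrite rmorphM rmorph_prod.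
Qed.

Lemma tratio_diag_tensor k i : tratio A (diag_tensor k x) i = r.
Proof.
have rsumE : rsum (diag_tensor k x) = x.
  by apply/funext => j; rewrite rsum_diag_tensor gtr0_norm.
rewrite tratioE //; last by case: (S_k_diag_tensor k x_gt0).
by rewrite rsumE x_eigen mulfK // expf_neq0 // gt_eqF.
Qed.

Lemma min_tratio_le k (B : tensor k n) v : S_k B -> is_min_over (tratio A B) v -> v <= r.
Proof.
move=> B_Sk [le_v [j _]]; have rsumB_gt0 i := S_k_rsum_gt0 i B_Sk.
apply: (collatz_wielandt_le A_ge0 x_gt0 x_eigen (y := rsum B)) => [i | | i].
- exact: rsum_ge0.
- by exists j.
- by rewrite -ler_pdivlMr ?exprn_gt0 // -tratioE //; case: B_Sk.
Qed.

Lemma max_tratio_ge k (B : tensor k n) v : S_k B -> is_max_over (tratio A B) v -> r <= v.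
Proof.
move=> B_Sk [le_v [j _]]; have rsumB_gt0 i := S_k_rsum_gt0 i B_Sk.
apply: (collatz_wielandt_ge A_ge0 x_gt0 x_eigen j (y := rsum B)) => // i.
by rewrite -ler_pdivrMr ?exprn_gt0 // -tratioE //; case: B_Sk.
Qed.

End PositiveEigenvector.

Theorem theorem3p5 (m n k : nat) (A : tensor m n) :
  (2 <= m)%N -> (1 <= n)%N -> (1 <= k)%N ->
  nonneg_tensor A -> weakly_irreducible A ->
  exists rho : RR,
    spectral_radius A rho /\
    (* max_{B in S_k} min_i tratio = rho, the max being attained *)
    (exists B : tensor k n, S_k B /\ is_min_over (tratio A B) rho) /\
    (forall (B : tensor k n) (v : RR), S_k B -> is_min_over (tratio A B) v -> v <= rho) /\
    (* min_{B in S_k} max_i tratio = rho, the min being attained *)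
    (exists B : tensor k n, S_k B /\ is_max_over (tratio A B) rho) /\
    (forall (B : tensor k n) (v : RR), S_k B -> is_max_over (tratio A B) v -> rho <= v).
Proof.
move=> m_ge2 n_ge1 _ A_ge0 A_irr; pose i0 : 'I_n := Ordinal n_ge1.
have [x x_gt0 x_eigen] := perron_eigenvector i0 A_ge0 A_irr m_ge2.
have diag_Sk := S_k_diag_tensor k x_gt0.
have diag_ratio := tratio_diag_tensor A_ge0 x_gt0 x_eigen k.
have diag_min : is_min_over (tratio A (diag_tensor k x)) (perron_root A).
  by split=> [i|]; [rewrite diag_ratio | exists i0].
have diag_max : is_max_over (tratio A (diag_tensor k x)) (perron_root A).
  by split=> [i|]; [rewrite diag_ratio | exists i0].
exists (perron_root A); split; first exact: spectral_radius_positive_eigenvector i0.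
split; first by exists (diag_tensor k x).
split; first by move=> B v; apply: (min_tratio_le A_ge0 x_gt0 x_eigen (B := B)).
split; first by exists (diag_tensor k x).
by move=> B v; apply: (max_tratio_ge A_ge0 x_gt0 x_eigen (B := B)).
Qed.
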